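(* Fix $\alpha>0$, $\gamma\in(0,1)$, a constant $\bar\rho_i>0$, a finite nonempty multiset $D_{\rho_i}$ of samples $x=(s,a_i,\mathbf{a}_{-i},s')$ with $s,s'\in S$, and a distribution $p_0$ on $S$. For $\nu_i:S\to\mathbb{R}$ let $$\hat e_{\nu_i}(x)=r(s,a_i,\mathbf{a}_{-i})-\alpha\log\frac{\boldsymbol{\pi}_{-i}(\mathbf{a}_{-i}\mid s)}{\boldsymbol{\pi}^D_{-i}(\mathbf{a}_{-i}\mid s,a_i)}+\gamma\nu_i(s')-\nu_i(s),$$ $$L(\nu_i):=\bar\rho_i\,\alpha\,\hat{\mathbf{E}}_{x\in D_{\rho_i}}\Big[\exp\Big(\tfrac1\alpha\hat e_{\nu_i}(x)-1\Big)\Big]+(1-\gamma)\mathbb{E}_{s_0\sim p_0}[\nu_i(s_0)],$$ $$\tilde{\mathcal{L}}(\nu_i):=\alpha\log\Big(\bar\rho_i\,\hat{\mathbf{E}}_{x\in D_{\rho_i}}\Big[\exp\Big(\tfrac1\alpha\hat e_{\nu_i}(x)\Big)\Big]\Big)+(1-\gamma)\mathbb{E}_{s_0\sim p_0}[\nu_i(s_0)].$$ Then for any minimizer $\tilde\nu_i^*$ of $\tilde{\mathcal{L}}$ (over all functions $S\to\mathbb{R}$), there is a constant $C\in\mathbb{R}$ such that $\tilde\nu_i^*+C$ is a minimizer of $L$.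
   Context: $\hat{\mathbf{E}}_{x\in D}[f(x)]:=\frac{1}{|D|}\sum_{x\in D}f(x)$ is the empirical average over a finite multiset $D$. $r$ is a real-valued reward; $\boldsymbol{\pi}_{-i}(\mathbf{a}_{-i}\mid s)$ and $\boldsymbol{\pi}^D_{-i}(\mathbf{a}_{-i}\mid s,a_i)$ are fixed conditional probability distributions, positive on the samples of $D_{\rho_i}$. *)

From mathcomp Require Import all_boot all_order all_algebra.
From mathcomp Require Import reals.
From mathcomp Require Import sequences exp.
Set Implicit Arguments. Unset Strict Implicit. Unset Printing Implicit Defensive.
Import Order.TTheory GRing.Theory Num.Theory.
Local Open Scope ring_scope.

Section Defs.
Variables (R : realType) (S Ai Am : finType).

Definition sample := (S * Ai * Am * S)%type.

Definition s_of (x : sample) : S := x.1.1.1.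
Definition ai_of (x : sample) : Ai := x.1.1.2.
Definition am_of (x : sample) : Am := x.1.2.
Definition s'_of (x : sample) : S := x.2.

Definition emp_avg (D : seq sample) (f : sample -> R) : R :=
  (\sum_(x <- D) f x) / (size D)%:R.

Definition expect (p0 : S -> R) (nu : S -> R) : R := \sum_s p0 s * nu s.

Definition is_distr (p : S -> R) : Prop :=
  (forall s, 0 <= p s) /\ \sum_s p s = 1.

Definition ehat (alpha gamma : R) (r : S -> Ai -> Am -> R)
  (pim : S -> Am -> R) (piD : S -> Ai -> Am -> R) (nu : S -> R) (x : sample) : R :=
  r (s_of x) (ai_of x) (am_of x)
  - alpha * ln (pim (s_of x) (am_of x) / piD (s_of x) (ai_of x) (am_of x))
  + gamma * nu (s'_of x) - nu (s_of x).

Definition Lobj (alpha gamma rho : R) (D : seq sample) (p0 : S -> R)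
  r pim piD (nu : S -> R) : R :=
  rho * alpha * emp_avg D (fun x => expR (ehat alpha gamma r pim piD nu x / alpha - 1))
  + (1 - gamma) * expect p0 nu.

Definition Ltilde (alpha gamma rho : R) (D : seq sample) (p0 : S -> R)
  r pim piD (nu : S -> R) : R :=
  alpha * ln (rho * emp_avg D (fun x => expR (ehat alpha gamma r pim piD nu x / alpha)))
  + (1 - gamma) * expect p0 nu.

End Defs.

(* The two objectives are linked by the elementary inequality ln y <= y / e,
   with equality exactly at y = e.  Writing Z(nu) for the empirical average of
   exp(e_nu / alpha), one has L(nu) = rho alpha Z(nu) / e + (1 - gamma) E[nu]
   and Ltilde(nu) = alpha ln (rho Z(nu)) + (1 - gamma) E[nu], so Ltilde <= L
   everywhere.  Adding a constant C to nu multiplies Z(nu) by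
   exp(-(1 - gamma) C / alpha), which leaves Ltilde unchanged and lets us reach
   rho Z = e, where Ltilde and L agree.  Hence for a minimizer nu0 of Ltilde,
   L(nu0 + C) = Ltilde(nu0 + C) = Ltilde(nu0) <= Ltilde(nu) <= L(nu). *)
From mathcomp Require Import all_boot all_order all_algebra.
From mathcomp Require Import reals.
From mathcomp Require Import sequences exp.
From mathcomp Require Import ring.
Set Implicit Arguments. Unset Strict Implicit. Unset Printing Implicit Defensive.
Import Order.TTheory GRing.Theory Num.Theory.
Local Open Scope ring_scope.

Lemma ln_le_mul_expRN1 (R : realType) (y : R) : 0 < y -> ln y <= y * expR (-1).
Proof.
move=> y_gt0; have := expR_ge1Dx (ln y - 1).
by rewrite expRD lnK ?posrE // addrC subrK.
Qed.

Lemma expect_shift (R : realType) (S : finType) (p0 nu : S -> R) (c : R) :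
  \sum_s p0 s = 1 -> expect p0 (fun s => nu s + c) = expect p0 nu + c.
Proof.
move=> p0_sum1; rewrite /expect.
under eq_bigr do rewrite mulrDr.
by rewrite big_split /= -big_distrl /= p0_sum1 mul1r.
Qed.

Lemma ehat_shift (R : realType) (S Ai Am : finType) (alpha gamma : R)
    (r : S -> Ai -> Am -> R) (pim : S -> Am -> R) (piD : S -> Ai -> Am -> R)
    (nu : S -> R) (c : R) (x : sample S Ai Am) :
  ehat alpha gamma r pim piD (fun s => nu s + c) x
  = ehat alpha gamma r pim piD nu x - (1 - gamma) * c.
Proof. by rewrite /ehat; ring. Qed.

Section Objectives.
Variables (R : realType) (S Ai Am : finType).
Variables (alpha gamma rho : R) (D : seq (sample S Ai Am)) (p0 : S -> R).
Variables (r : S -> Ai -> Am -> R) (pim : S -> Am -> R) (piD : S -> Ai -> Am -> R).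
Hypotheses (alpha_gt0 : 0 < alpha) (gamma_lt1 : gamma < 1) (rho_gt0 : 0 < rho).
Hypotheses (D_neq0 : D != [::]) (p0_sum1 : \sum_s p0 s = 1).

Let Lt := Ltilde alpha gamma rho D p0 r pim piD.
Let L := Lobj alpha gamma rho D p0 r pim piD.

Definition avg_expR_ehat (nu : S -> R) : R :=
  emp_avg D (fun x => expR (ehat alpha gamma r pim piD nu x / alpha)).

Lemma avg_expR_ehat_gt0 (nu : S -> R) : 0 < avg_expR_ehat nu.
Proof.
rewrite /avg_expR_ehat /emp_avg; apply: divr_gt0; last first.
  by rewrite ltr0n lt0n size_eq0.
case: D D_neq0 => // x D' _; rewrite big_cons.
apply: ltr_pwDl; first exact: expR_gt0.
by apply: sumr_ge0 => y _; exact/ltW/expR_gt0.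
Qed.

Lemma rho_avg_expR_ehat_gt0 (nu : S -> R) : 0 < rho * avg_expR_ehat nu.
Proof. by rewrite mulr_gt0 ?avg_expR_ehat_gt0. Qed.

Lemma LobjE (nu : S -> R) :
  L nu = rho * alpha * (avg_expR_ehat nu * expR (-1)) + (1 - gamma) * expect p0 nu.
Proof.
rewrite /L /Lobj /avg_expR_ehat /emp_avg; congr (_ * _ + _).
rewrite mulrAC; congr (_ / _); rewrite big_distrl /=.
by apply: eq_bigr => x _; rewrite -expRD.
Qed.

Lemma avg_expR_ehat_shift (nu : S -> R) (c : R) :
  avg_expR_ehat (fun s => nu s + c)
  = avg_expR_ehat nu * expR (- ((1 - gamma) * c / alpha)).
Proof.
rewrite /avg_expR_ehat /emp_avg mulrAC; congr (_ / _); rewrite big_distrl /=.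
by apply: eq_bigr => x _; rewrite ehat_shift -expRD mulrBl.
Qed.

Lemma Ltilde_shift (nu : S -> R) (c : R) : Lt (fun s => nu s + c) = Lt nu.
Proof.
have alpha_neq0 : alpha != 0 by rewrite gt_eqF.
rewrite /Lt /Ltilde -/(avg_expR_ehat _) -/(avg_expR_ehat nu).
rewrite avg_expR_ehat_shift expect_shift // mulrA.
rewrite lnM ?posrE ?rho_avg_expR_ehat_gt0 ?expR_gt0 // expRK.
by field.
Qed.

Lemma Ltilde_le_Lobj (nu : S -> R) : Lt nu <= L nu.
Proof.
rewrite LobjE /Lt /Ltilde -/(avg_expR_ehat nu) lerD2r.
have -> : rho * alpha * (avg_expR_ehat nu * expR (-1))
          = alpha * (rho * avg_expR_ehat nu * expR (-1)) by ring.
by rewrite ler_pM2l // ln_le_mul_expRN1 // rho_avg_expR_ehat_gt0.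
Qed.

Lemma Lobj_eq_Ltilde (nu : S -> R) :
  rho * avg_expR_ehat nu = expR 1 -> L nu = Lt nu.
Proof.
move=> rhoZ_e; rewrite LobjE /Lt /Ltilde -/(avg_expR_ehat nu) rhoZ_e expRK.
by rewrite mulrAC mulrA rhoZ_e -expRD subrr expR0 mul1r mulr1.
Qed.

(* The shift solving rho Z(nu + C) = e. *)
Definition normalizing_shift (nu : S -> R) : R :=
  alpha * (ln (rho * avg_expR_ehat nu) - 1) / (1 - gamma).

Lemma rho_avg_expR_ehat_normalized (nu : S -> R) :
  rho * avg_expR_ehat (fun s => nu s + normalizing_shift nu) = expR 1.
Proof.
have alpha_neq0 : alpha != 0 by rewrite gt_eqF.
have gamma1_neq0 : 1 - gamma != 0 by rewrite subr_eq0 gt_eqF.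
rewrite avg_expR_ehat_shift /normalizing_shift mulrA.
have -> : - ((1 - gamma) * (alpha * (ln (rho * avg_expR_ehat nu) - 1) / (1 - gamma))
             / alpha) = 1 - ln (rho * avg_expR_ehat nu).
  by field; apply/andP.
by rewrite expRD expRN lnK ?posrE ?rho_avg_expR_ehat_gt0 // mulrCA mulfV
  ?mulr1 // gt_eqF ?rho_avg_expR_ehat_gt0.
Qed.

End Objectives.

Theorem lemma4 (R : realType) (S Ai Am : finType)
  (alpha gamma rho : R) (D : seq (sample S Ai Am)) (p0 : S -> R)
  (r : S -> Ai -> Am -> R) (pim : S -> Am -> R) (piD : S -> Ai -> Am -> R) :
  0 < alpha -> 0 < gamma < 1 -> 0 < rho -> D != [::] -> is_distr p0 ->
  (* pi_{-i}(. | s) and pi^D_{-i}(. | s, a_i) are probability distributions *)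
  (forall s, (forall am, 0 <= pim s am) /\ \sum_am pim s am = 1) ->
  (forall s ai, (forall am, 0 <= piD s ai am) /\ \sum_am piD s ai am = 1) ->
  (* positive on the samples of D *)
  (forall x, x \in D -> 0 < pim (s_of x) (am_of x)) ->
  (forall x, x \in D -> 0 < piD (s_of x) (ai_of x) (am_of x)) ->
  forall nustar : S -> R,
    (forall nu : S -> R,
       Ltilde alpha gamma rho D p0 r pim piD nustar
       <= Ltilde alpha gamma rho D p0 r pim piD nu) ->
    exists C : R, forall nu : S -> R,
      Lobj alpha gamma rho D p0 r pim piD (fun s => nustar s + C)
      <= Lobj alpha gamma rho D p0 r pim piD nu.
Proof.
move=> alpha_gt0 /andP[_ gamma_lt1] rho_gt0 D_neq0 [_ p0_sum1] _ _ _ _ nustar nustar_min.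
exists (normalizing_shift alpha gamma rho D r pim piD nustar) => nu.
have normalized := rho_avg_expR_ehat_normalized r pim piD
  alpha_gt0 gamma_lt1 rho_gt0 D_neq0 nustar.
rewrite (Lobj_eq_Ltilde p0 normalized).
rewrite (Ltilde_shift gamma r pim piD alpha_gt0 rho_gt0 D_neq0 p0_sum1).
apply: le_trans (nustar_min nu) _.
exact: (Ltilde_le_Lobj gamma p0 r pim piD alpha_gt0 rho_gt0 D_neq0).
Qed.
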